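(* Let $\gamma$ be a non-polyhedral gauge on $\mathbb{R}^2$. Then there exist $a,b\in\mathbb{R}^2$ such that $\mathrm{EH}_\gamma(\{a,b\})$ is unbounded.
   Context: A gauge $\gamma$ on $\mathbb{R}^d$ is the Minkowski functional of a convex compact set $B_\gamma$ with the origin in its interior (not necessarily symmetric); it is polyhedral if $B_\gamma$ is a polytope. $\gamma^\circ$ is the dual gauge with unit ball $B_{\gamma^\circ}$. For $u\in B_{\gamma^\circ}$: if $\gamma^\circ(u)=1$, $N(u)=\mathbb{R}_{\ge0}F(u)$ with $F(u)=\{x\in B_\gamma:\langle u,x\rangle=1\}$; otherwise $N(u)=\{0\}$. For finite $S$ and $\pi=(u_s)_{s\in S}\subset B_{\gamma^\circ}$, $C_\pi=\bigcap_{s\in S}(s+N(u_s))$; a nonempty $C_\pi$ is an elementary convex set for $S$; the elementary hull $\mathrm{EH}_\gamma(S)$ is the union of all bounded elementary convex sets for $S$. *)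

From HB Require Import structures.
From mathcomp Require Import all_boot all_order all_algebra.
From mathcomp Require Import all_classical all_reals all_analysis.
Set Implicit Arguments. Unset Strict Implicit. Unset Printing Implicit Defensive.
Import Order.TTheory GRing.Theory Num.Theory.
Import numFieldNormedType.Exports.
Local Open Scope classical_set_scope.
Local Open Scope ring_scope.

Section Gauges.
Variable R : realType.
Notation P := (R * R)%type.

Definition dotp (u x : P) : R := u.1 * x.1 + u.2 * x.2.

Definition addp (x y : P) : P := (x.1 + y.1, x.2 + y.2).
Definition scalep (t : R) (x : P) : P := (t * x.1, t * x.2).

Definition convex_set2 (B : set P) : Prop :=
  forall x y t, B x -> B y -> 0 <= t -> t <= 1 ->
    B (addp (scalep t x) (scalep (1 - t) y)).

Definition gauge_ball (B : set P) : Prop :=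
  convex_set2 B /\ compact B /\ (B°) (0, 0).

Definition gauge (B : set P) (x : P) : R :=
  inf [set t | 0 <= t /\ exists2 y, B y & x = scalep t y].

Definition conv_hull (s : seq P) : set P :=
  [set x | exists w : nat -> R, (forall i, 0 <= w i) /\
     \sum_(i < size s) w i = 1 /\
     x = (\sum_(i < size s) w i * (nth (0, 0) s i).1,
          \sum_(i < size s) w i * (nth (0, 0) s i).2)].

Definition polytope (B : set P) : Prop := exists s : seq P, B = conv_hull s.

Definition dual_gauge (B : set P) (u : P) : R := sup [set dotp u x | x in B].
Definition dual_ball (B : set P) : set P := [set u | dual_gauge B u <= 1].

Definition Fface (B : set P) (u : P) : set P := [set x | B x /\ dotp u x = 1].
Definition Ncone (B : set P) (u : P) : set P :=
  if dual_gauge B u == 1 then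
    [set z | exists t, exists2 x, 0 <= t /\ Fface B u x & z = scalep t x]
  else [set (0, 0)].

Definition Cpi (B : set P) (S : set P) (pi : P -> P) : set P :=
  [set z | forall s, S s -> exists2 y, Ncone B (pi s) y & z = addp s y].

Definition bounded2 (A : set P) : Prop :=
  exists M : R, forall x, A x -> `|x.1| <= M /\ `|x.2| <= M.

Definition EH (B : set P) (S : set P) : set P :=
  [set z | exists pi : P -> P, (forall s, S s -> dual_ball B (pi s)) /\
     Cpi B S pi !=set0 /\ bounded2 (Cpi B S pi) /\ Cpi B S pi z].

End Gauges.

(* If B is not a polytope it has infinitely many faces. Were any two faces
   with points closer than d to meet, then covering B by finitely many balls of
   radius d/2 and keeping the two endpoints of one face per ball would give a
   finite set meeting every face, whose convex hull is B. So there are disjoint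
   faces F(u), F(v) with points x, y such that |x - y| < d, for every d > 0.
   For a coordinate vector b transverse to x, the cell N(u) /\ (b + N(v)) is a
   bounded elementary convex set (the faces are disjoint) containing the point
   (det(b, y) / det(x, y)) x, whose norm is at least of order 1/d since
   |det(x, y)| = O(d). Hence EH({0, e1}) or EH({0, e2}) is unbounded. *)

From HB Require Import structures.
From mathcomp Require Import all_boot all_order all_algebra finmap.
From mathcomp Require Import all_classical all_reals all_analysis.
From mathcomp Require Import ring lra.
Import Order.TTheory GRing.Theory Num.Theory.
Import numFieldNormedType.Exports.
Local Open Scope classical_set_scope.
Local Open Scope ring_scope.

Section Plane.
Context {R : realType}.
Notation P := (R * R)%type.

Definition det2 (x y : P) : R := x.1 * y.2 - x.2 * y.1.

Lemma pair_ext (x y : P) : x.1 = y.1 -> x.2 = y.2 -> x = y.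
Proof. by case: x; case: y => /= ? ? ? ? -> ->. Qed.

Lemma dotpZr (u x : P) (a : R) : dotp u (scalep a x) = a * dotp u x.
Proof. by rewrite /dotp /=; ring. Qed.

Lemma dotpZl (u x : P) (a : R) : dotp (scalep a u) x = a * dotp u x.
Proof. by rewrite /dotp /=; ring. Qed.

Lemma dotpDr (u x y : P) : dotp u (addp x y) = dotp u x + dotp u y.
Proof. by rewrite /dotp /=; ring. Qed.

Lemma add0p (x : P) : addp 0 x = x.
Proof. by apply: pair_ext; rewrite /= add0r. Qed.

Lemma scale1p (x : P) : scalep 1 x = x.
Proof. by apply: pair_ext; rewrite /= mul1r. Qed.

Lemma dotp_continuous (u : P) : continuous (dotp u).
Proof. by move=> x; apply: cvgD; apply: cvgMr; [exact: cvg_fst | exact: cvg_snd]. Qed.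

Lemma normZp (a : R) (x : P) : `|scalep a x| = `|a| * `|x|.
Proof. exact: prod_norm_scale. Qed.

Lemma coord_le_norm (x : P) : `|x.1| <= `|x| /\ `|x.2| <= `|x|.
Proof. by rewrite prod_normE; split; rewrite le_max lexx ?orbT. Qed.

Lemma dotpp_gt0 (w : P) : w != 0 -> 0 < dotp w w.
Proof.
case: w => a b; rewrite /dotp /= xpair_eqE negb_and -!expr2 => /orP[] h.
  have := sqr_ge0 b; have : 0 < a ^+ 2 by rewrite exprn_even_gt0.
  lra.
have := sqr_ge0 a; have : 0 < b ^+ 2 by rewrite exprn_even_gt0.
lra.
Qed.

Lemma det2_norm_le (x y : P) : `|det2 x y| <= 2 * `|x| * `|y|.
Proof.
have [x1 x2] := coord_le_norm x; have [y1 y2] := coord_le_norm y.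
rewrite /det2 (le_trans (ler_normB _ _)) // !normrM mulr2n -mulrA mulrDl.
by rewrite mul1r lerD // ler_pM.
Qed.

Lemma det2_subr (b x y : P) : det2 b x - det2 b y = det2 b (x - y).
Proof. by rewrite /det2 /=; ring. Qed.

Lemma det2C (x y : P) : det2 y x = - det2 x y.
Proof. by rewrite /det2; ring. Qed.

Lemma det2_cramer (b x y : P) :
  scalep (det2 b y) x = addp (scalep (det2 x y) b) (scalep (det2 b x) y).
Proof. by apply: pair_ext; rewrite /det2 /=; ring. Qed.

Lemma mulr_gt0_trans {a b c : R} : 0 < a * b -> 0 < b * c -> 0 < a * c.
Proof. by move=> ab bc; nra. Qed.

Lemma divr_gt0_mul {a c : R} : 0 < a * c -> 0 < a / c.
Proof.
move=> ac; have c0 : c != 0 by apply: contraTneq ac => ->; rewrite mulr0 ltxx.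
have -> : a / c = a * c / c ^+ 2 by field.
by rewrite divr_gt0 ?exprn_even_gt0.
Qed.

Lemma near_same_sign {r a a' : R} : 0 < r -> r <= `|a| -> `|a - a'| <= r / 2 ->
  0 < a * a' /\ r / 2 <= `|a'|.
Proof.
move=> r0 + /[!ler_distlC] /andP[lo hi].
case: (lerP 0 a) => a0; rewrite ?(ger0_norm a0) ?(ltr0_norm a0) => ra.
  by split; [rewrite mulr_gt0 | rewrite ger0_norm]; lra.
by split; [rewrite nmulr_rgt0 | rewrite ltr0_norm]; lra.
Qed.

Lemma coord_det2_ge {r : R} {x : P} : r <= `|x| ->
  exists b, [/\ b = (1, 0) \/ b = (0, 1), `|b| = 1 & r <= `|det2 b x|].
Proof.
rewrite prod_normE le_max => /orP[] xr.
  exists (0, 1); split; first by right.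
    by rewrite prod_normE /= normr0 normr1 max_r ?ler01.
  by rewrite /det2 /= mul0r mul1r sub0r normrN.
exists (1, 0); split; first by left.
  by rewrite prod_normE /= normr0 normr1 max_l ?ler01.
by rewrite /det2 /= mul0r mul1r subr0.
Qed.

Lemma bounded2_normP (A : set P) : bounded2 A <-> exists M, forall x, A x -> `|x| <= M.
Proof.
split=> -[M HM]; exists M => x /HM; rewrite ?prod_normE.
  by move=> [h1 h2]; rewrite ge_max h1 h2.
by rewrite ge_max => /andP.
Qed.

End Plane.

Section ConvexHull.
Context {R : realType}.
Notation P := (R * R)%type.
Implicit Types (p c x : P) (s : seq P).

Lemma conv_hull_nil : conv_hull ([::] : seq P) = set0.
Proof.
apply/seteqP; split => // x [w [_ [+ _]]].
by rewrite big_ord0 => /eqP; rewrite eq_sym oner_eq0.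
Qed.

Lemma conv_hull1 p : conv_hull [:: p] = [set p].
Proof.
apply/seteqP; split => x.
  move=> [w [_ [+ ->]]]; rewrite /= !big_ord1 /= => ->.
  by apply: pair_ext; rewrite /= mul1r.
move=> ->; exists (fun=> 1); rewrite /= !big_ord1 /= !mul1r.
by split => //; split => //; case: p.
Qed.

Lemma conv_hull_cons p s t c : 0 <= t <= 1 -> conv_hull s c ->
  conv_hull (p :: s) (addp (scalep t p) (scalep (1 - t) c)).
Proof.
move=> /andP[t0 t1] [w [w0 [ws ->]]].
exists (fun n => if n is k.+1 then (1 - t) * w k else t); split.
  by case=> [|k] //; rewrite mulr_ge0 // subr_ge0.
rewrite /= !big_ord_recl /=; split.
  by rewrite -mulr_sumr; under eq_bigr do rewrite add0n; rewrite ws; ring.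
apply: pair_ext; rewrite /addp /scalep /= mulr_sumr; congr (_ + _);
  by apply: eq_bigr => i _; rewrite add0n; ring.
Qed.

Lemma conv_hull_neq0 {s} : s != [::] -> conv_hull s !=set0.
Proof.
elim: s => // p [|q s] IH _; first by exists p; rewrite conv_hull1.
have [c hc] := IH isT.
exists (addp (scalep 0 p) (scalep (1 - 0) c)).
by apply: conv_hull_cons => //; rewrite lexx ler01.
Qed.

Lemma conv_hull_consP p s x : s != [::] -> conv_hull (p :: s) x ->
  exists t c, [/\ 0 <= t <= 1, conv_hull s c & x = addp (scalep t p) (scalep (1 - t) c)].
Proof.
move=> sne [w [w0 [+ ->]]]; rewrite /= !big_ord_recl /=.
have sh (F : nat -> nat -> R) :
    \sum_(i < size s) F (bump 0 i) (0 + i)%N = \sum_(i < size s) F i.+1 i.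
  by apply: eq_bigr => i _; rewrite /bump leq0n.
rewrite (sh (fun j _ => w j)) (sh (fun j k => w j * (nth 0 s k).1)).
rewrite (sh (fun j k => w j * (nth 0 s k).2)).
set t := w 0%N => ws.
have S0 : 0 <= \sum_(i < size s) w i.+1 by apply: sumr_ge0.
have [t1|t1] := eqVneq t 1.
  have Z (i : 'I_(size s)) : w i.+1 = 0.
    apply: (@psumr_eq0P _ _ xpredT (fun j : 'I_(size s) => w j.+1)) => //.
    by apply: (@addrI _ 1); rewrite addr0 -{1}t1 ws.
  have [c hc] := conv_hull_neq0 sne.
  exists 1, c; split => //; first by rewrite lexx ler01.
  apply: pair_ext; rewrite /addp /scalep /= t1 subrr !mul0r !addr0 mul1r big1 ?addr0 //;
    by move=> i _; rewrite Z mul0r.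
have u0 : 1 - t != 0 by rewrite subr_eq0 eq_sym.
exists t, ((\sum_(i < size s) w i.+1 * (nth 0 s i).1) / (1 - t),
           (\sum_(i < size s) w i.+1 * (nth 0 s i).2) / (1 - t)).
split; last by apply: pair_ext; rewrite /addp /scalep /=; congr (_ + _); rewrite mulrC divfK.
  by rewrite w0 -ws lerDl.
exists (fun n => w n.+1 / (1 - t)); split.
  by move=> n; rewrite divr_ge0 // -ws addrAC subrr add0r.
split; last by congr pair; rewrite mulr_suml; apply: eq_bigr => i _; rewrite mulrAC.
by rewrite -mulr_suml; apply: (canLR (mulfK u0)); rewrite mul1r; move: ws; lra.
Qed.

Lemma conv_hull_convex s : convex_set2 (conv_hull s).
Proof.
move=> x y t [w1 [w10 [ws1 ->]]] [w2 [w20 [ws2 ->]]] t0 t1.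
exists (fun i => t * w1 i + (1 - t) * w2 i); split.
  by move=> i; rewrite addr_ge0 // mulr_ge0 // subr_ge0.
split; first by rewrite big_split /= -!mulr_sumr ws1 ws2; ring.
by apply: pair_ext; rewrite /= !mulr_sumr -big_split; apply: eq_bigr => i _ /=; ring.
Qed.

Lemma conv_hull_compact s : compact (conv_hull s).
Proof.
elim: s => [|p [|q s] IH]; first by rewrite conv_hull_nil; exact: compact0.
  by rewrite conv_hull1; exact: compact_set1.
pose f (tc : R * P) := addp (scalep tc.1 p) (scalep (1 - tc.1) tc.2).
have -> : conv_hull [:: p, q & s] = f @` (`[0, 1]%classic `*` conv_hull (q :: s)).
  apply/seteqP; split => x.
    move=> /conv_hull_consP [//| t [c [tr hc ->]]].
    by exists (t, c) => //; split => //=; rewrite in_itv.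
  by move=> [[t c] [ht hc] <-]; apply: conv_hull_cons hc; move: ht; rewrite /= in_itv.
apply: continuous_compact; last by apply: compact_setX => //; exact: segment_compact.
apply/continuous_subspaceT => -[t c].
apply: cvgD; first by apply: cvgZl; exact: cvg_fst.
by apply: cvgZ; [apply: cvgB; [exact: cvg_cst | exact: cvg_fst] | exact: cvg_snd].
Qed.

Lemma conv_hull_min (A : set P) s : convex_set2 A -> (forall p, p \in s -> A p) ->
  conv_hull s `<=` A.
Proof.
move=> cA; elim: s => [|p [|q s] IH] sA; first by rewrite conv_hull_nil.
  by rewrite conv_hull1 => x ->; apply: sA; rewrite mem_seq1.
move=> x /conv_hull_consP [//| t [c [/andP[t0 t1] hc ->]]].
apply: cA => //; first by apply: sA; rewrite mem_head.
by apply: IH => // y hy; apply: sA; rewrite in_cons hy orbT.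
Qed.

Lemma mem_conv_hull {s p} : p \in s -> conv_hull s p.
Proof.
elim: s => // q [|q' s] IH; first by rewrite mem_seq1 conv_hull1 => /eqP.
rewrite in_cons => /orP[/eqP ->|hp].
  have [c hc] := conv_hull_neq0 (isT : q' :: s != [::]).
  have e : addp (scalep 1 q) (scalep (1 - 1) c) = q.
    by apply: pair_ext; rewrite /= subrr !mul0r addr0 mul1r.
  by rewrite -[X in conv_hull _ X]e; apply: conv_hull_cons => //; rewrite lexx ler01.
have e : addp (scalep 0 q) (scalep (1 - 0) p) = p.
  by apply: pair_ext; rewrite /= subr0 !mul0r add0r mul1r.
by rewrite -[X in conv_hull _ X]e; apply: conv_hull_cons; [rewrite lexx ler01 | exact: IH].
Qed.

End ConvexHull.

Section CompactConvex.
Context {R : realType}.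
Notation P := (R * R)%type.

Lemma compact_argmax {A : set P} {f : P -> R} : A !=set0 -> compact A -> continuous f ->
  exists2 x0, A x0 & forall x, A x -> f x <= f x0.
Proof.
move=> A0 cA cf; have [c Ac cmax] := compact_EVT_max A0 cA (continuous_subspaceT cf).
by exists c => [|x Ax]; [rewrite inE in Ac | apply: cmax; rewrite inE].
Qed.

Lemma nearest_point_obtuse {A : set P} {y c : P} : convex_set2 A -> A c ->
  (forall c', A c' -> dotp (y - c) (y - c) <= dotp (y - c') (y - c')) ->
  forall c', A c' -> dotp (y - c) c' <= dotp (y - c) c.
Proof.
move=> cA Ac cmin c' Ac'; rewrite leNgt; apply/negP => lt_cc'.
set a := dotp (y - c) c' - dotp (y - c) c; set D := dotp (c' - c) (c' - c).
have a0 : 0 < a by rewrite subr_gt0.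
have D0 : 0 <= D by rewrite /D /dotp -!expr2 addr_ge0 ?sqr_ge0.
set l := a / (a + D).
have l0 : 0 < l by rewrite divr_gt0 //; lra.
have l1 : l <= 1 by rewrite ler_pdivrMr; lra.
have la : l * (a + D) = a by rewrite divfK //; lra.
have := cmin _ (cA _ _ _ Ac' Ac (ltW l0) l1).
have -> : dotp (y - addp (scalep l c') (scalep (1 - l) c))
               (y - addp (scalep l c') (scalep (1 - l) c))
          = dotp (y - c) (y - c) - 2 * l * a + l ^+ 2 * D by rewrite /a /D /dotp /=; ring.
(* minimality along the segment forces 2 a <= l D, i.e. 2 a (a + D) <= a D *)
move=> le_w; have : 2 * a <= l * D by nra.
nra.
Qed.

Lemma separation {A : set P} {y : P} : A !=set0 -> compact A -> convex_set2 A -> ~ A y ->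
  exists w, forall c, A c -> dotp w c < dotp w y.
Proof.
move=> A0 cA convA Ay.
have dist_cont : continuous (fun c : P => - dotp (y - c) (y - c)).
  move=> c; apply: cvgN; rewrite /dotp /=.
  by apply: cvgD; apply: cvgM; apply: cvgB;
    try exact: cvg_cst; [exact: cvg_fst | exact: cvg_fst | exact: cvg_snd | exact: cvg_snd].
have [c Ac cmin] := compact_argmax A0 cA dist_cont.
have obtuse : forall c', A c' -> dotp (y - c) c' <= dotp (y - c) c.
  by apply: (nearest_point_obtuse convA Ac) => c' /cmin; rewrite lerN2.
have yc : y - c != 0 by apply: contraPneq Ay => /eqP; rewrite subr_eq0 => /eqP ->.
exists (y - c) => c' Ac'; apply: (le_lt_trans (obtuse _ Ac')).
have -> : dotp (y - c) y = dotp (y - c) c + dotp (y - c) (y - c) by rewrite /dotp /=; ring.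
by rewrite ltrDl dotpp_gt0.
Qed.

(* [compact_cover] is stated for pointed topological spaces; [P] is one, but the
   join instance has to be built by hand. *)
Lemma compact_ball_cover {A : set P} {e : R} : compact A -> 0 < e ->
  exists D : {fset P}, A `<=` \bigcup_(c in [set` D]) ball c e.
Proof.
move=> cA e0.
pose T : ptopologicalType := HB.pack_for ptopologicalType P (Pointed.class P) (Topological.class P).
have : @cover_compact T A by rewrite -compact_cover.
move=> /(_ P A (ball ^~ e) (fun c _ => ball_open c e)) [|D _ AD]; last by exists D.
by move=> x Ax; exists x => //; exact: ballxx.
Qed.

End CompactConvex.

Section GaugeBall.
Context {R : realType}.
Notation P := (R * R)%type.
Variable B : set P.
Hypothesis gB : gauge_ball B.

Lemma gauge_ball_compact : compact B. Proof. by case: gB => _ []. Qed.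

Lemma gauge_ball_convex : convex_set2 B. Proof. by case: gB. Qed.

Lemma gauge_ball_bounded : exists Rb, 0 < Rb /\ forall x, B x -> `|x| <= Rb.
Proof.
have [M [Mr MB]] := compact_bounded gauge_ball_compact.
exists (`|M| + 1); split; first by rewrite ltr_pwDr.
by apply: MB; rewrite (le_lt_trans (real_ler_norm Mr)) // ltrDl.
Qed.

Lemma gauge_ball_ball : exists r, 0 < r /\ forall x, `|x| < r -> B x.
Proof.
case: gB => _ [_ /nbhs_ballP [r r0 rB]]; exists r; split => // x xr; apply: rB.
by rewrite -ball_normE /= sub0r normrN.
Qed.

Lemma gauge_ball0 : B 0.
Proof. by have [r [r0 rB]] := gauge_ball_ball; apply: rB; rewrite normr0. Qed.

Lemma dotp_argmax u : exists2 x0, B x0 & forall x, B x -> dotp u x <= dotp u x0.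
Proof.
apply: (compact_argmax _ gauge_ball_compact (dotp_continuous u)).
by exists 0; exact: gauge_ball0.
Qed.

Lemma dual_gauge_ub u x : B x -> dotp u x <= dual_gauge B u.
Proof.
have [x0 Bx0 x0max] := dotp_argmax u.
move=> Bx; apply: sup_upper_bound; last by exists x.
by split; [exists (dotp u x), x | exists (dotp u x0) => _ [z Bz <-]; exact: x0max].
Qed.

Lemma dual_gauge_max {u x0} : B x0 -> (forall x, B x -> dotp u x <= dotp u x0) ->
  dual_gauge B u = dotp u x0.
Proof.
move=> Bx0 x0max; apply/le_anti; rewrite dual_gauge_ub // andbT.
by apply: ge_sup; [exists (dotp u x0), x0 | move=> _ [x Bx <-]; exact: x0max].
Qed.

Definition dual_unit u := dual_gauge B u = 1.

Definition disjoint_faces u v := ~ exists z, Fface B u z /\ Fface B v z.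

Lemma face_le1 {u x} : dual_unit u -> B x -> dotp u x <= 1.
Proof. by rewrite /dual_unit => <-; exact: dual_gauge_ub. Qed.

Lemma face_neq0 {u} : dual_unit u -> Fface B u !=set0.
Proof.
move=> Du; have [x0 Bx0 x0max] := dotp_argmax u.
by exists x0; split; rewrite // -(dual_gauge_max Bx0 x0max).
Qed.

Lemma supporting_face {w} : w != 0 -> exists u, dual_unit u /\
  forall p, Fface B u p -> forall y, B y -> dotp w y <= dotp w p.
Proof.
move=> w0; have [x0 Bx0 x0max] := dotp_argmax w.
have [r [r0 rB]] := gauge_ball_ball.
have nw : 0 < `|w| by rewrite normr_gt0.
have Bwr : B (scalep (r / (2 * `|w|)) w).
  apply: rB; rewrite normZp ger0_norm ?divr_ge0 ?mulr_ge0 ?ltW //.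
  have -> : r / (2 * `|w|) * `|w| = r / 2 by field; rewrite gt_eqF.
  lra.
have m0 : 0 < dotp w x0.
  apply: lt_le_trans (x0max _ Bwr); rewrite dotpZr mulr_gt0 ?dotpp_gt0 //.
  by rewrite divr_gt0 // mulr_gt0.
exists (scalep (dotp w x0)^-1 w); split.
  rewrite /dual_unit (dual_gauge_max Bx0) ?dotpZl ?mulVf ?gt_eqF // => x Bx.
  by rewrite dotpZl mulrC ler_pdivrMr // mul1r x0max.
move=> p [_]; rewrite dotpZl => wp1 y By.
have -> : dotp w p = dotp w x0.
  by apply: (mulfI (invr_neq0 (lt0r_neq0 m0))); rewrite wp1 mulVf ?gt_eqF.
exact: x0max.
Qed.

Lemma face_norm_ge {r u x} : (forall y, `|y| < r -> B y) -> dual_unit u -> Fface B u x ->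
  r <= `|x|.
Proof.
move=> rB Du [Bx ux1]; rewrite leNgt; apply/negP => xr.
have x0 : x != 0.
  by apply: contraPneq ux1 => ->; rewrite /dotp /= !mulr0 addr0 => /esym/eqP; rewrite oner_eq0.
have nx : 0 < `|x| by rewrite normr_gt0.
(* a slightly longer multiple of x is still in B, yet lies beyond the face *)
set l := (r + `|x|) / (2 * `|x|).
have l1 : 1 < l by rewrite ltr_pdivlMr ?mulr_gt0 //; lra.
have lx : l * `|x| = (r + `|x|) / 2 by rewrite /l; field; rewrite gt_eqF.
have /(face_le1 Du) : B (scalep l x).
  by apply: rB; rewrite normZp ger0_norm ?lx; lra.
by rewrite dotpZr ux1 mulr1; lra.
Qed.

Lemma face_scale_eq1 {u v x l} : dual_unit u -> dual_unit v ->
  Fface B u x -> Fface B v (scalep l x) -> 0 < l -> l = 1.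
Proof.
move=> Du Dv [Bx ux] [Blx vlx] l0; apply/le_anti/andP; split.
  by have := face_le1 Du Blx; rewrite dotpZr ux mulr1.
by rewrite -vlx dotpZr ger_pMr // (face_le1 Dv Bx).
Qed.

Lemma face_compact u : compact (Fface B u).
Proof.
have -> : Fface B u = B `&` dotp u @^-1` [set 1] by [].
apply: compact_closedI gauge_ball_compact _.
apply: preimage_closed; first by move=> x _; exact: dotp_continuous.
exact/accessible_closed_set1/hausdorff_accessible/Rhausdorff.
Qed.

Lemma face_argmax {f : P -> R} {u} : continuous f -> dual_unit u ->
  exists2 q, Fface B u q & forall y, Fface B u y -> f y <= f q.
Proof. by move=> cf Du; exact: compact_argmax (face_neq0 Du) (face_compact u) cf. Qed.

Definition rotp (u : P) : P := (- u.2, u.1).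

(* Faces lie on lines orthogonal to [u0], so a face meeting [F u0] at [z] and
   leaning towards [rotp u0] also contains the extreme point of [F u0] in that direction. *)
Lemma face_extreme {u0 u k q z} : dual_unit u -> k != 0 -> Fface B u0 q ->
  (forall y, Fface B u0 y -> dotp (scalep k (rotp u0)) y <= dotp (scalep k (rotp u0)) q) ->
  Fface B u0 z -> Fface B u z -> 0 <= dotp u (scalep k (rotp u0)) -> Fface B u q.
Proof.
move=> Du k0 [Bq u0q] qmax Fz [_ uz] ue; split => //.
apply/le_anti/andP; split; first exact: face_le1 Du Bq.
have [_ u0z] := Fz.
set e := scalep k (rotp u0).
have key : (dotp u q - 1) * (k ^+ 2 * dotp u0 u0) = dotp u e * (dotp e q - dotp e z).
  have : dotp u u0 * (dotp u0 q - dotp u0 z) = 0 by rewrite u0q u0z subrr mulr0.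
  rewrite -uz /e /rotp /dotp /= => h.
  by rewrite -[LHS]subr0 -(mulr0 (k ^+ 2)) -h; ring.
have u00 : u0 != 0.
  by apply: contraPneq u0z => ->; rewrite /dotp /= !mul0r addr0 => /esym/eqP; rewrite oner_eq0.
have pos : 0 < k ^+ 2 * dotp u0 u0 by rewrite mulr_gt0 ?dotpp_gt0 ?exprn_even_gt0.
rewrite -subr_ge0 -(pmulr_lge0 _ pos) key mulr_ge0 // subr_ge0.
exact: qmax.
Qed.

Lemma face_endpoints {u0} : dual_unit u0 -> exists q1 q2, [/\ Fface B u0 q1, Fface B u0 q2 &
  forall u z, dual_unit u -> Fface B u0 z -> Fface B u z -> Fface B u q1 \/ Fface B u q2].
Proof.
move=> Du0; pose e k := scalep k (rotp u0).
have [q1 Fq1 q1max] := face_argmax (dotp_continuous (e 1)) Du0.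
have [q2 Fq2 q2max] := face_argmax (dotp_continuous (e (-1))) Du0.
exists q1, q2; split => // u z Du Fz Fuz.
have [ue|ue] := leP 0 (dotp u (e 1)).
  by left; apply: face_extreme Du (oner_neq0 _) Fq1 q1max Fz Fuz ue.
right; apply: face_extreme Du _ Fq2 q2max Fz Fuz _; first by rewrite oppr_eq0 oner_neq0.
by move: ue; rewrite /e !dotpZr mulN1r mul1r oppr_ge0 => /ltW.
Qed.

Lemma polytope_of_face_points (s : seq P) : (forall p, p \in s -> B p) ->
  (forall u, dual_unit u -> exists2 p, p \in s & Fface B u p) -> polytope B.
Proof.
move=> sB sF; exists s; apply/seteqP; split; last exact: conv_hull_min gauge_ball_convex sB.
move=> y By; apply: contrapT => ys.
have e10 : (1, 0) != 0 :> P by rewrite xpair_eqE negb_and oner_eq0.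
have [u [Du _]] := supporting_face e10.
have s0 : s != [::] by have [p + _] := sF u Du; apply: contraTneq => ->.
have [w wsep] := separation (conv_hull_neq0 s0) (conv_hull_compact s) (conv_hull_convex s) ys.
have w0 : w != 0.
  have [c hc] := conv_hull_neq0 s0.
  by apply: contraTneq (wsep c hc) => ->; rewrite /dotp /= !mul0r addr0 ltxx.
have [v [Dv vmax]] := supporting_face w0.
have [p ps Fp] := sF v Dv.
by have := wsep p (mem_conv_hull ps); rewrite ltNge vmax.
Qed.

Lemma ball_face_points {d : R} (c : P) : 0 < d ->
  (forall u v x y, dual_unit u -> dual_unit v -> Fface B u x -> Fface B v y ->
     `|x - y| < d -> ~ disjoint_faces u v) ->
  exists l : seq P, (forall p, p \in l -> B p) /\ forall u x,
    dual_unit u -> Fface B u x -> ball c (d / 2) x -> exists2 p, p \in l & Fface B u p.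
Proof.
move=> d0 close.
have [[u0 [x0 [Du0 Fx0 cx0]]]|none] :=
  pselect (exists u0 x0, [/\ dual_unit u0, Fface B u0 x0 & ball c (d / 2) x0]); last first.
  by exists [::]; split => // u x Du Fx cx; exfalso; apply: none; exists u, x.
have [q1 [q2 [[Bq1 _] [Bq2 _] endq]]] := face_endpoints Du0.
exists [:: q1; q2]; split; first by move=> p; rewrite !inE => /orP[] /eqP ->.
move=> u x Du Fx cx.
have : ball x d x0 := ball_splitr cx cx0.
rewrite -ball_normE /= => /(close _ _ _ _ Du Du0 Fx Fx0) /contrapT [z [Fz Fz0]].
by case: (endq u z Du Fz0 Fz) => Fq; [exists q1 | exists q2]; rewrite // !inE eqxx ?orbT.
Qed.

Lemma not_polytope_close_faces {d : R} : 0 < d -> ~ polytope B -> exists u v x y,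
  [/\ dual_unit u /\ dual_unit v, disjoint_faces u v, Fface B u x, Fface B v y & `|x - y| < d].
Proof.
move=> d0 nB; apply: contrapT => far; apply: nB.
have close u v x y : dual_unit u -> dual_unit v -> Fface B u x -> Fface B v y ->
    `|x - y| < d -> ~ disjoint_faces u v.
  by move=> Du Dv Fx Fy xy uv; apply: far; exists u, v, x, y.
have [D cover] := compact_ball_cover gauge_ball_compact (divr_gt0 d0 (ltr0n _ 2)).
have [l lP] := choice (fun c => ball_face_points c d0 close).
apply: (@polytope_of_face_points (flatten [seq l c | c <- D])).
  by move=> p /flatten_mapP [c _]; exact: (lP c).1.
move=> u Du; have [x Fx] := face_neq0 Du.
have [c Dc cx] := cover x Fx.1.
have [p pl Fp] := (lP c).2 u x Du Fx cx.
by exists p => //; apply/flatten_mapP; exists c.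
Qed.

Definition face_cone u : set P :=
  [set z | exists t, exists2 x, 0 <= t /\ Fface B u x & z = scalep t x].

Definition cell (u v b : P) : set P := face_cone u `&` [set addp b y | y in face_cone v].

Lemma Ncone_dual_unit {u} : dual_unit u -> Ncone B u = face_cone u.
Proof. by rewrite /Ncone /dual_unit => ->; rewrite eqxx. Qed.

Lemma Cpi_pair (u v b : P) : b != 0 -> dual_unit u -> dual_unit v ->
  Cpi B [set 0; b] (fun s => if s == 0 then u else v) = cell u v b.
Proof.
move=> b0 Du Dv.
have [Nu Nv] := (Ncone_dual_unit Du, Ncone_dual_unit Dv).
apply/seteqP; split => z.
  move=> Cz; have [y + zy] := Cz 0 (or_introl erefl); rewrite eqxx Nu => uy.
  have [y' + zb] := Cz b (or_intror erefl); rewrite (negbTE b0) Nv => vy'.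
  by rewrite add0p in zy; split; [rewrite zy | exists y'; rewrite // zb].
move=> [uz [y vy bz]] s [->|->]; first by exists z; rewrite ?eqxx ?Nu ?add0p.
by exists y; rewrite ?(negbTE b0) ?Nv ?bz.
Qed.

Lemma disjoint_faces_dotp_lt1 {u v} : dual_unit u -> dual_unit v -> disjoint_faces u v ->
  exists m, [/\ 0 <= m, m < 1 & forall y, Fface B v y -> dotp u y <= m].
Proof.
move=> Du Dv uv; have [q [Bq vq] qmax] := face_argmax (dotp_continuous u) Dv.
exists (Num.max (dotp u q) 0); split; first by rewrite le_max lexx orbT.
  rewrite gt_max ltr01 andbT lt_neqAle face_le1 // andbT.
  by apply/eqP => uq; apply: uv; exists q.
by move=> y /qmax /le_trans; apply; rewrite le_max lexx.
Qed.

Lemma cell_bounded u v b : dual_unit u -> dual_unit v -> disjoint_faces u v ->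
  bounded2 (cell u v b).
Proof.
move=> Du Dv uv; have [m [m0 m1 mmax]] := disjoint_faces_dotp_lt1 Du Dv uv.
have [Rb [Rb0 BRb]] := gauge_ball_bounded.
pose K := (`|dotp u b| + `|dotp v b|) / (1 - m).
apply/bounded2_normP; exists (K * Rb) => _ [[t [x [t0 [Bx ux]] ->]] [z [s [y [s0 Fy] ->]] e]].
have vxt : dotp v (scalep t x) <= t by rewrite dotpZr ler_piMr // (face_le1 Dv Bx).
have ut : dotp u (scalep t x) = t by rewrite dotpZr ux mulr1.
have vt : dotp v (scalep t x) = dotp v b + s by rewrite -e dotpDr dotpZr Fy.2 mulr1.
(* [t = u.b + s u.y <= u.b + m s] and [s <= t - v.b] bound [(1 - m) t] *)
have : (1 - m) * t <= `|dotp u b| + `|dotp v b|.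
  have tm : t <= dotp u b + m * s.
    by rewrite -ut -e dotpDr dotpZr lerD2l [m * s]mulrC -subr_ge0 -mulrBr mulr_ge0 // subr_ge0 mmax.
  have ms : m * s <= m * (t - dotp v b) by apply: ler_wpM2l => //; lra.
  have mvb : `|m * dotp v b| <= `|dotp v b| by rewrite normrM ger0_norm // ler_piMl // ltW.
  have := ler_norm (dotp u b); have := ler_norm (- (m * dotp v b)); rewrite normrN; lra.
rewrite mulrC -ler_pdivlMr ?subr_gt0 // -/K normZp (ger0_norm t0) => tK.
by apply: ler_pM => //; exact: BRb.
Qed.

Lemma EH_cell {u v b z} : b != 0 -> dual_unit u -> dual_unit v -> disjoint_faces u v ->
  cell u v b z -> EH B [set 0; b] z.
Proof.
move=> b0 Du Dv uv Cz; exists (fun s => if s == 0 then u else v); rewrite Cpi_pair //.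
split; first by move=> s _; case: ifP => _; rewrite /dual_ball /= ?Du ?Dv lexx.
by split; [exists z | split => //; exact: cell_bounded].
Qed.

Lemma disjoint_faces_sym {u v} : disjoint_faces u v -> disjoint_faces v u.
Proof. by move=> uv [z [Fu Fv]]; apply: uv; exists z. Qed.

Lemma disjoint_faces_det2_neq0 {u v x y b} : dual_unit u -> dual_unit v -> disjoint_faces u v ->
  Fface B u x -> Fface B v y -> 0 < det2 b x * det2 b y -> det2 x y != 0.
Proof.
move=> Du Dv uv Fx Fy bxy; apply/eqP => xy0.
have bx0 : det2 b x != 0 by apply: contraTneq bxy => ->; rewrite mul0r ltxx.
set l := det2 b y / det2 b x.
have l0 : 0 < l.
  have -> : l = det2 b x * det2 b y / det2 b x ^+ 2 by rewrite /l; field.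
  by rewrite divr_gt0 ?exprn_even_gt0.
have yl : y = scalep l x.
  have := det2_cramer b x y; rewrite xy0 /scalep /addp /= !mul0r !add0r => -[e1 e2].
  by apply: pair_ext; rewrite /l /= mulrAC ?e1 ?e2 mulrAC mulfV // mul1r.
rewrite yl in Fy; have l1 := face_scale_eq1 Du Dv Fx Fy l0.
by apply: uv; exists x; split; rewrite // -[x]scale1p -l1.
Qed.

Lemma EH_face_ray {u v x y b} : b != 0 -> dual_unit u -> dual_unit v -> disjoint_faces u v ->
  Fface B u x -> Fface B v y -> det2 x y != 0 ->
  0 <= det2 b y / det2 x y -> 0 <= det2 b x / det2 x y ->
  EH B [set 0; b] (scalep (det2 b y / det2 x y) x).
Proof.
move=> b0 Du Dv uv Fx Fy c0 t0 s0; apply: EH_cell b0 Du Dv uv _.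
split; first by exists (det2 b y / det2 x y), x.
exists (scalep (det2 b x / det2 x y) y); first by exists (det2 b x / det2 x y), y.
have := det2_cramer b x y; rewrite /scalep /addp => -[e1 e2].
by apply: pair_ext; rewrite /= [RHS]mulrAC ?e1 ?e2; field.
Qed.

Lemma EH_far_point {r u v x y b} : 0 < r -> (forall z, `|z| < r -> B z) -> b != 0 ->
  dual_unit u -> dual_unit v -> disjoint_faces u v -> Fface B u x -> Fface B v y ->
  0 < det2 b x * det2 b y ->
  exists2 z, EH B [set 0; b] z & r * Num.min `|det2 b x| `|det2 b y| <= `|z| * `|det2 x y|.
Proof.
move=> r0 rB b0; wlog pos : u v x y / 0 < det2 b y * det2 x y => [wlog_pos|] Du Dv uv Fx Fy bxy.
  have c0 := disjoint_faces_det2_neq0 Du Dv uv Fx Fy bxy.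
  have [p|neg] := ltP 0 (det2 b y * det2 x y); first exact: wlog_pos p Du Dv uv Fx Fy bxy.
  have [||z Ez zr] := wlog_pos v u y x _ Dv Du (disjoint_faces_sym uv) Fy Fx.
  - rewrite [det2 y x]det2C; apply: (mulr_gt0_trans bxy).
    rewrite mulrN oppr_gt0 lt_neqAle neg andbT mulf_eq0 (negbTE c0) orbF.
    by apply: contraTneq bxy => ->; rewrite mulr0 ltxx.
  - by rewrite mulrC.
  - by exists z; move: zr; rewrite [det2 y x]det2C normrN minC.
have c0 : det2 x y != 0 by apply: contraTneq pos => ->; rewrite mulr0 ltxx.
have t0 := divr_gt0_mul pos.
have s0 := divr_gt0_mul (mulr_gt0_trans bxy pos).
exists (scalep (det2 b y / det2 x y) x).
  exact: EH_face_ray b0 Du Dv uv Fx Fy c0 (ltW t0) (ltW s0).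
rewrite normZp normrM normfV mulrAC divfK ?normr_eq0 // mulrC.
apply: ler_pM; rewrite ?le_min ?normr_ge0 ?ge_min ?lexx ?orbT //.
  exact: ltW.
exact: face_norm_ge rB Du Fx.
Qed.

Lemma not_polytope_EH_unbounded : ~ polytope B ->
  ~ bounded2 (EH B [set 0; (1, 0)]) \/ ~ bounded2 (EH B [set 0; (0, 1)]).
Proof.
move=> nB; apply: contrapT => /not_orP[].
move=> /contrapT/bounded2_normP[M1 M1b] /contrapT/bounded2_normP[M2 M2b].
pose M := Num.max (Num.max M1 M2) 0.
have M0 : 0 <= M by rewrite le_max lexx orbT.
have [r [r0 rB]] := gauge_ball_ball.
have [Rb [Rb0 BRb]] := gauge_ball_bounded.
(* [d] is small enough for the far point, of norm >= r^2 / (4 Rb d), to exceed [M] *)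
pose d := Num.min (r / 4) (r ^+ 2 / (4 * Rb * (M + 1))).
have d0 : 0 < d by rewrite lt_min !divr_gt0 ?exprn_even_gt0 ?mulr_gt0 ?gt_eqF //; lra.
have [u [v [x [y [[Du Dv] uv Fx Fy xy]]]]] := not_polytope_close_faces d0 nB.
have [b [b01 b1 bx]] := coord_det2_ge (face_norm_ge rB Du Fx).
have b0 : b != 0 by rewrite -normr_eq0 b1 oner_eq0.
have [bxy by2] : 0 < det2 b x * det2 b y /\ r / 2 <= `|det2 b y|.
  apply: near_same_sign r0 bx _; rewrite det2_subr (le_trans (det2_norm_le _ _)) // b1 mulr1.
  have : d <= r / 4 by rewrite ge_min lexx.
  lra.
have [z Ez zr] := EH_far_point r0 rB b0 Du Dv uv Fx Fy bxy.
have zM : `|z| <= M.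
  case: b01 Ez => -> Ez; [move: (M1b _ Ez) | move: (M2b _ Ez)]; move/le_trans; apply;
    by rewrite !le_max lexx ?orbT.
have cxy : `|det2 x y| <= 2 * Rb * d.
  have -> : det2 x y = det2 x (y - x) by rewrite /det2 /=; ring.
  apply: (le_trans (det2_norm_le _ _)); apply: ler_pM; rewrite ?mulr_ge0 //.
    by rewrite ler_pM2l // BRb //; case: Fx.
  by rewrite distrC ltW.
have dM : d * (4 * Rb * (M + 1)) <= r ^+ 2.
  by rewrite -ler_pdivlMr ?mulr_gt0 ?ge_min ?lexx ?orbT //; lra.
have : r * (r / 2) <= M * (2 * Rb * d).
  apply: le_trans (le_trans zr _); last by apply: ler_pM.
  apply: ler_wpM2l; first exact: ltW.
  by rewrite le_min by2 andbT (le_trans _ bx) // ler_pdivrMr; lra.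
have : 0 < Rb * d by rewrite mulr_gt0.
nra.
Qed.

End GaugeBall.

Theorem mainTheorem16 (R : realType) (B : set (R * R)) :
  gauge_ball B -> ~ polytope B ->
  exists a b : R * R, ~ bounded2 (EH B [set a; b]).
Proof.
move=> gB /(not_polytope_EH_unbounded _ gB)[] unbounded.
  by exists 0, (1, 0).
by exists 0, (0, 1).
Qed.
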